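(* Let $P,Q_0,Q_1$ be probability measures with $Q_1\perp P$, and let $0\le\epsilon\le1$. Then $$H^2(P,(1-\epsilon)Q_0+\epsilon Q_1)=2(1-\sqrt{1-\epsilon})+\sqrt{1-\epsilon}\,H^2(P,Q_0),$$ and $$\frac14\le\frac{H^2(P,(1-\epsilon)Q_0+\epsilon Q_1)}{\epsilon\vee H^2(P,Q_0)}\le4.$$
   Context: $H^2(P,Q)=\int(\sqrt{dP}-\sqrt{dQ})^2$ is the squared Hellinger distance. $Q_1\perp P$ means there is a measurable set $A$ with $Q_1(A)=1$ and $P(A)=0$. $a\vee b=\max(a,b)$. *)

From HB Require Import structures.
From mathcomp Require Import all_boot all_order all_algebra.
From mathcomp Require Import all_classical all_reals all_analysis.
Set Implicit Arguments. Unset Strict Implicit. Unset Printing Implicit Defensive.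
Import Order.TTheory GRing.Theory Num.Theory.
Local Open Scope classical_set_scope.
Local Open Scope ring_scope.

Definition is_density d (T : measurableType d) (R : realType)
  (mu : {measure set T -> \bar R}) (P : set T -> \bar R) (p : T -> R) : Prop :=
  [/\ measurable_fun setT p, (forall x, 0 <= p x) &
      forall A, measurable A -> P A = (\int[mu]_(x in A) (p x)%:E)%E].

(* Squared Hellinger distance  H^2(P,Q) = \int (sqrt dP - sqrt dQ)^2,
   computed from densities p, q of P, Q w.r.t. a common dominating measure mu. *)
Definition hellinger2 d (T : measurableType d) (R : realType)
  (mu : {measure set T -> \bar R}) (p q : T -> R) : \bar R :=
  (\int[mu]_x ((Num.sqrt (p x) - Num.sqrt (q x)) ^+ 2)%:E)%E.

Definition singular_to d (T : measurableType d) (R : realType)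
  (Q1 P : set T -> \bar R) : Prop :=
  exists A, [/\ measurable A, Q1 A = 1%E & P A = 0%E].

Definition mixture d (T : measurableType d) (R : realType) (eps : R)
  (Q0 Q1 : set T -> \bar R) : set T -> \bar R :=
  fun A => ((1 - eps)%:E * Q0 A + eps%:E * Q1 A)%E.

From HB Require Import structures.
From mathcomp Require Import all_boot all_order all_algebra.
From mathcomp Require Import all_classical all_reals all_analysis.
From mathcomp Require Import measurable_realfun ring lra.
Import Order.TTheory GRing.Theory Num.Theory.
Local Open Scope classical_set_scope.
Local Open Scope ring_scope.

(* Write s = sqrt(1 - eps), so that the mixture density is m = s^2 q0 + eps q1
   a.e.  Where p > 0 we have q1 = 0 a.e., hence sqrt m = s sqrt q0 and
   (sqrt p - s sqrt q0)^2 = s (sqrt p - sqrt q0)^2 + (1 - s) p - (1 - s) s q0;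
   where p = 0 the integrand is just m.  Integrating this pointwise identity
   gives H^2(P,M) + (1 - s) s = s H^2(P,Q0) + (1 - s) + eps, which is the
   claimed formula because eps = (1 - s)(1 + s).  The two-sided bound is then
   elementary, using 0 <= H^2(P,Q0) <= 2. *)

Lemma hellinger_integrand_mixture (R : rcfType) (s eps p q0 q1 m : R) :
  0 <= s -> s ^+ 2 = 1 - eps -> 0 <= p -> 0 <= q0 -> 0 <= m ->
  p = 0 \/ q1 = 0 -> m = (1 - eps) * q0 + eps * q1 ->
  (Num.sqrt p - Num.sqrt m) ^+ 2 + (1 - s) * s * q0 =
  s * (Num.sqrt p - Num.sqrt q0) ^+ 2 + (1 - s) * p + eps * q1.
Proof.
move=> s0 s2 p0 q00 m0 [->|q1_0] m_def.
  by rewrite sqrtr0 !sub0r !sqrrN !sqr_sqrtr // m_def -s2; ring.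
rewrite m_def q1_0 mulr0 addr0 -s2 sqrtrM ?sqr_ge0 // sqrtr_sqr ger0_norm //.
have := sqr_sqrtr p0; have := sqr_sqrtr q00.
by move: (Num.sqrt p) (Num.sqrt q0) => a b <- <-; ring.
Qed.

Lemma hellinger_mixture_max_bounds (R : realFieldType) (s eps r : R) :
  0 <= s -> s ^+ 2 = 1 - eps -> 0 <= eps -> 0 <= r <= 2 ->
  4^-1 * Num.max eps r <= 2 * (1 - s) + s * r <= 4 * Num.max eps r.
Proof.
move=> s0 s2 e0 /andP[r0 r2]; have s1 : s <= 1 by nra.
have s1' : 0 <= 1 - s by rewrite subr_ge0.
have r2' : 0 <= 2 - r by rewrite subr_ge0.
have := mulr_ge0 s0 s1'; have := mulr_ge0 r0 s1'; have := mulr_ge0 r2' s1'.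
by have [] := leP eps r => ? *; apply/andP; split; nra.
Qed.

Section hellinger_densities.
Context {d : measure_display} {T : measurableType d} {R : realType}.
Variable mu : {measure set T -> \bar R}.

Lemma measurable_fun_sqrt (D : set T) (f : T -> R) :
  measurable_fun D f -> measurable_fun D (fun x => Num.sqrt (f x)).
Proof. exact: measurableT_comp (continuous_measurable_fun (@sqrt_continuous R)). Qed.

Lemma measurable_hellinger_integrand {p q : T -> R} :
  measurable_fun setT p -> measurable_fun setT q ->
  measurable_fun setT (fun x => (Num.sqrt (p x) - Num.sqrt (q x)) ^+ 2).
Proof.
by move=> mp mq; apply: measurable_funX; apply: measurable_funB;
  exact: measurable_fun_sqrt.
Qed.

Lemma measurable_fun_lincomb (D : set T) (a b : R) (f g : T -> R) :
  measurable_fun D f -> measurable_fun D g ->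
  measurable_fun D (fun x => a * f x + b * g x).
Proof.
by move=> mf mg; apply: measurable_funD; apply: measurable_funM => //;
  exact: measurable_cst.
Qed.

Lemma ge0_integral_lincomb (D : set T) (a b : R) (f g : T -> R) :
  measurable D -> 0 <= a -> 0 <= b ->
  measurable_fun setT f -> measurable_fun setT g ->
  (forall x, 0 <= f x) -> (forall x, 0 <= g x) ->
  (\int[mu]_(x in D) (a * f x + b * g x)%:E =
   a%:E * \int[mu]_(x in D) (f x)%:E + b%:E * \int[mu]_(x in D) (g x)%:E)%E.
Proof.
move=> mD a0 b0 mf mg f0 g0.
have mfD : measurable_fun D (EFin \o f).
  by apply/measurable_EFinP; exact: measurable_funS mf.
have mgD : measurable_fun D (EFin \o g).
  by apply/measurable_EFinP; exact: measurable_funS mg.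
rewrite (eq_integral (fun x => a%:E * (f x)%:E + b%:E * (g x)%:E)%E); last first.
  by move=> x _; rewrite EFinD !EFinM.
rewrite ge0_integralD //; first last.
- exact: emeasurable_funM.
- by move=> x _; rewrite -EFinM lee_fin mulr_ge0.
- exact: emeasurable_funM.
- by move=> x _; rewrite -EFinM lee_fin mulr_ge0.
by rewrite !ge0_integralZl_EFin // => x _; rewrite lee_fin.
Qed.

Lemma density_integral_setT {P : probability T R} {p : T -> R} :
  is_density mu P p -> (\int[mu]_x (p x)%:E = 1)%E.
Proof. by case=> _ _ hP; rewrite -hP // probability_setT. Qed.

Lemma density_ae_eq0 {P : set T -> \bar R} {p : T -> R} {A : set T} :
  is_density mu P p -> measurable A -> P A = 0%E ->
  {ae mu, forall x, A x -> p x = 0}.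
Proof.
case=> mp p0 hP mA PA0.
have mpA : measurable_fun A (EFin \o p).
  by apply/measurable_EFinP; exact: measurable_funS mp.
have : {ae mu, forall x, A x -> (EFin \o p) x = cst 0%E x}.
  apply/(ae_eq_integral_abs mu mA mpA); rewrite -PA0 hP //.
  by apply: eq_integral => x _ /=; rewrite ger0_norm.
by apply: filterS => x + Ax => /(_ Ax) [].
Qed.

Lemma density_ae_unique {P : set T -> \bar R} {p p' : T -> R} :
  (P setT < +oo)%E -> is_density mu P p -> is_density mu P p' ->
  {ae mu, forall x, p x = p' x}.
Proof.
move=> Pfin [mp p0 hP] [mp' _ hP'].
have : {ae mu, forall x, setT x -> (EFin \o p) x = (EFin \o p') x}.
  apply: integral_ae_eq => //; last first.
  - by move=> E _ mE; rewrite -hP // -hP'.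
  - exact/measurable_EFinP.
  apply/integrableP; split; first exact/measurable_EFinP.
  by rewrite (eq_integral (EFin \o p)) -?hP // => x _; rewrite /= ger0_norm.
by apply: filterS => x /(_ I) [].
Qed.

Lemma is_density_mixture {Q0 Q1 : set T -> \bar R} {q0 q1 : T -> R} {eps : R} :
  0 <= eps <= 1 -> is_density mu Q0 q0 -> is_density mu Q1 q1 ->
  is_density mu (mixture eps Q0 Q1) (fun x => (1 - eps) * q0 x + eps * q1 x).
Proof.
move=> /andP[e0 e1] [mq0 q00 hQ0] [mq1 q10 hQ1]; split.
- exact: measurable_fun_lincomb.
- by move=> x; rewrite addr_ge0 // mulr_ge0 // subr_ge0.
- by move=> A mA; rewrite ge0_integral_lincomb ?subr_ge0 // /mixture hQ0 // hQ1.
Qed.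

Lemma singular_density_ae {P Q1 : probability T R} {p q1 : T -> R} :
  singular_to Q1 P -> is_density mu P p -> is_density mu Q1 q1 ->
  {ae mu, forall x, p x = 0 \/ q1 x = 0}.
Proof.
move=> [A [mA Q1A PA]] dP dQ1.
have Q1CA : Q1 (~` A) = 0%E by rewrite probability_setC // Q1A subee.
have pA0 := density_ae_eq0 dP mA PA.
have qCA0 := density_ae_eq0 dQ1 (measurableC mA) Q1CA.
apply: filterS2 pA0 qCA0 => x p0 q10.
by have [/p0|/q10] := pselect (A x); [left | right].
Qed.

Lemma hellinger2_ge0 (p q : T -> R) : (0 <= hellinger2 mu p q)%E.
Proof. by apply: integral_ge0 => x _; rewrite lee_fin sqr_ge0. Qed.

Lemma hellinger2_le_integralD {p q : T -> R} :
  measurable_fun setT p -> measurable_fun setT q ->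
  (forall x, 0 <= p x) -> (forall x, 0 <= q x) ->
  (hellinger2 mu p q <= \int[mu]_x (p x)%:E + \int[mu]_x (q x)%:E)%E.
Proof.
move=> mp mq p0 q0.
rewrite -[X in (_ <= X + _)%E]mul1e -[X in (_ <= _ + X)%E]mul1e.
rewrite -ge0_integral_lincomb //.
apply: ge0_le_integral => //.
- by move=> x _; rewrite lee_fin sqr_ge0.
- by apply/measurable_EFinP; exact: measurable_hellinger_integrand.
- exact/measurable_EFinP/measurable_fun_lincomb.
move=> x _; rewrite lee_fin !mul1r.
have := sqr_sqrtr (p0 x); have := sqr_sqrtr (q0 x).
move: (Num.sqrt (p x)) (Num.sqrt (q x)) (sqrtr_ge0 (p x)) (sqrtr_ge0 (q x)).
by move=> a b a0 b0 <- <-; nra.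
Qed.

Lemma hellinger2_le2 {P Q : probability T R} {p q : T -> R} :
  is_density mu P p -> is_density mu Q q -> (hellinger2 mu p q <= 2%:E)%E.
Proof.
move=> dP dQ; have := density_integral_setT dP; have := density_integral_setT dQ.
case: dP dQ => mp p0 _ [mq q0 _] iq ip.
by apply: le_trans (hellinger2_le_integralD mp mq p0 q0) _; rewrite ip iq.
Qed.

Lemma hellinger2_fin_num {P Q : set T -> \bar R} {p q : T -> R} :
  (P setT < +oo)%E -> (Q setT < +oo)%E ->
  is_density mu P p -> is_density mu Q q -> hellinger2 mu p q \is a fin_num.
Proof.
move=> Pfin Qfin [mp p0 hP] [mq q0 hQ].
rewrite ge0_fin_numE ?hellinger2_ge0 //.
have := hellinger2_le_integralD mp mq p0 q0.
by rewrite -hP // -hQ // => /le_lt_trans; apply; rewrite lte_add_pinfty.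
Qed.

Lemma hellinger2_mixture_ae {P Q0 Q1 : probability T R} {p q0 q1 m : T -> R}
    {s eps : R} :
  0 <= s -> s ^+ 2 = 1 - eps -> 0 <= eps ->
  is_density mu P p -> is_density mu Q0 q0 -> is_density mu Q1 q1 ->
  measurable_fun setT m -> (forall x, 0 <= m x) ->
  {ae mu, forall x, p x = 0 \/ q1 x = 0} ->
  {ae mu, forall x, m x = (1 - eps) * q0 x + eps * q1 x} ->
  (hellinger2 mu p m + ((1 - s) * s)%:E =
   s%:E * hellinger2 mu p q0 + ((1 - s)%:E + eps%:E))%E.
Proof.
move=> s0 s2 e0 dP dQ0 dQ1 mm m0 pq1_ae m_ae.
have ip := density_integral_setT dP; have iq0 := density_integral_setT dQ0.
have iq1 := density_integral_setT dQ1.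
case: dP dQ0 dQ1 => mp p0 _ [mq0 q00 _] [mq1 q10 _].
have s1 : 0 <= 1 - s by rewrite subr_ge0; nra.
have mh0 := measurable_hellinger_integrand mp mq0.
have mhm := measurable_hellinger_integrand mp mm.
rewrite /hellinger2.
(* The factors [1 *] put the integrands in the shape of [ge0_integral_lincomb]. *)
transitivity (\int[mu]_x
  (1 * (Num.sqrt (p x) - Num.sqrt (m x)) ^+ 2 + (1 - s) * s * q0 x)%:E)%E.
  by rewrite ge0_integral_lincomb ?mulr_ge0 // ?iq0 ?mul1e ?mule1 // => x;
    rewrite sqr_ge0.
transitivity (\int[mu]_x (1 * (s * (Num.sqrt (p x) - Num.sqrt (q0 x)) ^+ 2
                               + (1 - s) * p x) + eps * q1 x)%:E)%E.
  apply: ae_eq_integral => //.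
  - exact/measurable_EFinP/measurable_fun_lincomb.
  - apply/measurable_EFinP/measurable_fun_lincomb => //.
    exact: measurable_fun_lincomb.
  apply: filterS2 m_ae pq1_ae => x mx pq1 _ /=.
  by rewrite !mul1r; congr EFin; apply: hellinger_integrand_mixture.
rewrite ge0_integral_lincomb //; first last.
- by move=> x; apply: addr_ge0; apply: mulr_ge0; rewrite ?sqr_ge0.
- exact: measurable_fun_lincomb.
rewrite ge0_integral_lincomb //; last by move=> x; rewrite sqr_ge0.
by rewrite ip iq1 mul1e !mule1 addeA.
Qed.

Lemma hellinger2_mixture_singular {P Q0 Q1 : probability T R}
    {p q0 q1 m : T -> R} {eps : R} :
  0 <= eps <= 1 -> singular_to Q1 P ->
  is_density mu P p -> is_density mu Q0 q0 -> is_density mu Q1 q1 ->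
  is_density mu (mixture eps Q0 Q1) m ->
  hellinger2 mu p m =
    ((2 * (1 - Num.sqrt (1 - eps)))%:E
     + (Num.sqrt (1 - eps))%:E * hellinger2 mu p q0)%E.
Proof.
move=> eps01 PQ1 dP dQ0 dQ1 dM; have /andP[e0 e1] := eps01.
have P_fin : (P setT < +oo)%E by rewrite probability_setT ltry.
have Q0_fin : (Q0 setT < +oo)%E by rewrite probability_setT ltry.
have M_fin : (mixture eps Q0 Q1 setT < +oo)%E.
  by rewrite /mixture !probability_setT !mule1 -EFinD ltry.
have m_ae := density_ae_unique M_fin dM (is_density_mixture eps01 dQ0 dQ1).
have s2 : Num.sqrt (1 - eps) ^+ 2 = 1 - eps by rewrite sqr_sqrtr // subr_ge0.
have [mm m0 _] := dM.
have := hellinger2_mixture_ae (sqrtr_ge0 _) s2 e0 dP dQ0 dQ1 mm m0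
  (singular_density_ae PQ1 dP dQ1) m_ae.
rewrite -(fineK (hellinger2_fin_num P_fin Q0_fin dP dQ0)).
rewrite -(fineK (hellinger2_fin_num P_fin M_fin dP dM)).
move: (Num.sqrt (1 - eps)) s2 => s s2.
by rewrite -!EFinM -!EFinD => -[key]; congr EFin; nra.
Qed.

End hellinger_densities.

Theorem lemma7 (d : measure_display) (T : measurableType d) (R : realType)
  (P Q0 Q1 : probability T R) (mu : {measure set T -> \bar R})
  (p q0 q1 m : T -> R) (eps : R) :
  0 <= eps <= 1 ->
  singular_to Q1 P ->
  is_density mu P p -> is_density mu Q0 q0 -> is_density mu Q1 q1 ->
  is_density mu (mixture eps Q0 Q1) m ->
  hellinger2 mu p m =
    ((2 * (1 - Num.sqrt (1 - eps)))%:E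
     + (Num.sqrt (1 - eps))%:E * hellinger2 mu p q0)%E
  /\ ((4^-1)%:E * maxe eps%:E (hellinger2 mu p q0) <= hellinger2 mu p m
      <= 4%:E * maxe eps%:E (hellinger2 mu p q0))%E.
Proof.
move=> eps01 PQ1 dP dQ0 dQ1 dM.
have hm := hellinger2_mixture_singular mu eps01 PQ1 dP dQ0 dQ1 dM.
split=> //; rewrite hm.
move: (hellinger2_ge0 mu p q0) (hellinger2_le2 mu dP dQ0).
case: (hellinger2 mu p q0) => [r r0 r2||] //.
have /andP[e0 e1] := eps01.
rewrite -EFin_max -!EFinM -EFinD !lee_fin.
apply: hellinger_mixture_max_bounds; rewrite ?sqrtr_ge0 ?sqr_sqrtr ?subr_ge0 //.
by rewrite -!lee_fin r0 r2.
Qed.
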